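(* Let $G=(V,E,w)$ be a connected weighted graph with nonnegative edge weights, and let $f_{MST}(G)$ denote the weight of a minimum spanning tree of $G$. For add/remove adjacency over edges (adding one edge $e\notin E$ with an arbitrary nonnegative weight), $$\mathrm{RS}_{f_{MST}}(G)=\max_{S\subset V:\ \exists u\in S,\,v\in V\setminus S,\ \{u,v\}\notin E} w_1(S),$$ where $w_1(S)$ is the minimum weight among edges of $E$ crossing the cut $(S,V\setminus S)$.
   Context: $\mathrm{RS}_{f_{MST}}(G)=\max|f_{MST}((V,E))-f_{MST}((V,E\cup\{e\}))|$, the maximum over $e\in\binom{V}{2}\setminus E$ and over admissible weights of $e$ (weights are nonnegative; in the paper's setting all weights lie in $[0,B]$). *)

From HB Require Import structures.
From mathcomp Require Import all_boot all_order all_algebra.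
From mathcomp Require Import reals.
Set Implicit Arguments. Unset Strict Implicit. Unset Printing Implicit Defensive.
Import Order.TTheory GRing.Theory Num.Theory.
Local Open Scope ring_scope.

Section Graphs.
Variables (R : realType) (V : finType).
Implicit Types (E T : {set {set V}}) (w : {set V} -> R) (S e : {set V}).

Definition adj E : rel V := fun x y => (x != y) && ([set x; y] \in E).

Definition gconnected E : bool := [forall x, [forall y, connect (adj E) x y]].

Definition spanning_tree E T : bool :=
  [&& T \subset E, gconnected T & #|T| == #|V|.-1].

Definition tweight w T : R := \sum_(e in T) w e.

(* weight of a minimum spanning tree; the default (total weight of E) is an
   upper bound for every spanning tree weight when weights are nonnegative,
   so this is the true minimum whenever a spanning tree exists *)
Definition f_MST E w : R :=
  \big[Num.min/tweight w E]_(T : {set {set V}} | spanning_tree E T) tweight w T.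

Definition add_edge E e := e |: E.
Definition add_weight w e (c : R) : {set V} -> R :=
  fun x => if x == e then c else w x.

Definition crossing S e : bool := #|e :&: S| == 1%N.

Definition w1 E w S : R :=
  \big[Num.min/tweight w E]_(e in E | crossing S e) w e.

Definition cut_has_nonedge E S : bool :=
  [exists u in S, [exists v in ~: S, [set u; v] \notin E]].

Definition RS_rhs E w : R :=
  \big[Num.max/0]_(S : {set V} | cut_has_nonedge E S) w1 E w S.

End Graphs.

(* Adding a non-edge uv of weight c >= 0 can only lower the MST weight, since
   every spanning tree of G stays one.  It never lowers it by more than
   RS_rhs: in an MST T' of G + uv that uses uv, the component S of u in
   T' - uv is a cut containing the non-edge uv, so replacing uv by a lightest
   edge of G across S gives a spanning tree of G of weight
   w(T') - c + w_1(S) <= f_MST(G + uv) + RS_rhs.  Conversely, for a cut S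
   attaining RS_rhs and a non-edge uv across it, put c = 0 and take an MST T
   of G: the u-v path in T leaves S through some edge a with w a >= w_1(S),
   and exchanging a for uv saves at least w_1(S).
   Of trees we only need that a connected graph on V has at least |V| - 1
   edges, which follows by growing a tree one crossing edge at a time. *)

From HB Require Import structures.
From mathcomp Require Import all_boot all_order all_algebra.
From mathcomp Require Import reals lra zify.
Import Order.TTheory GRing.Theory Num.Theory.
Set Implicit Arguments. Unset Strict Implicit.

Section Connectivity.
Variable V : finType.
Implicit Types (E F T U : {set {set V}}) (S e : {set V}).

Lemma adj_sym T : symmetric (adj T).
Proof. by move=> x y; rewrite /adj eq_sym setUC. Qed.

Lemma connect_adj_sym T : connect_sym (adj T).
Proof. exact/sym_connect_sym/adj_sym. Qed.

Lemma adj_subset T U : T \subset U -> subrel (adj T) (adj U).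
Proof. by move=> /subsetP sTU x y /andP[xy /sTU]; rewrite /adj xy. Qed.

Lemma connect_subset T U x y :
  T \subset U -> connect (adj T) x y -> connect (adj U) x y.
Proof. by move=> sTU; apply: connect_sub => a b /(adj_subset sTU)/connect1. Qed.

Lemma gconnectedP T : reflect (forall x y, connect (adj T) x y) (gconnected T).
Proof.
apply: (iffP forallP) => [cT x y|cT x]; last exact/forallP.
by have /forallP := cT x; apply.
Qed.

Lemma gconnected_from T r : (forall z, connect (adj T) r z) -> gconnected T.
Proof.
move=> cT; apply/gconnectedP => x y.
by apply: connect_trans (cT y); rewrite connect_adj_sym.
Qed.

Lemma gconnected_subrel T U :
  gconnected T -> subrel (adj T) (connect (adj U)) -> gconnected U.
Proof. by move=> /gconnectedP cT sTU; apply/gconnectedP => x y; apply: connect_sub (cT x y). Qed.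

Lemma connect_pair T x y s t :
  connect (adj T) s t -> [set x; y] = [set s; t] -> connect (adj T) x y.
Proof.
move=> cst exy; have := set22 x y; have := set21 x y; rewrite exy !inE.
by case/orP=> /eqP-> /orP[] /eqP->; rewrite ?connect0 // connect_adj_sym.
Qed.

Lemma path_setD1 T e x p z :
  z \in e -> z \notin x :: p -> path (adj T) x p -> path (adj (T :\ e)) x p.
Proof.
move=> ze; elim: p x => //= y p IHp x; rewrite !inE negb_or => /andP[zx zyp].
case/andP=> /andP[xy xyT] yp; rewrite IHp // andbT /adj xy in_setD1 xyT andbT.
by apply: contraNneq zyp => exy; move: ze; rewrite -exy !inE (negbTE zx) => /= ->.
Qed.

Lemma uniq_path_cut T S x p : uniq (x :: p) -> path (adj T) x p ->
  x \in S -> last x p \notin S ->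
  exists s t, [/\ s \in S, t \notin S, adj T s t,
    connect (adj (T :\ [set s; t])) x s & connect (adj (T :\ [set s; t])) t (last x p)].
Proof.
elim: p x => [x _ _ -> //|y p IHp x] /= /andP[xNyp uyp] /andP[xy yp] xS lS.
have [yS|yNS] := boolP (y \in S); last first.
  exists x, y; split=> //; apply/connectP; exists p => //.
  by apply: (path_setD1 (z := x)); rewrite ?set21.
have [s [t [sS tNS st xs tl]]] := IHp y uyp yp yS lS.
exists s, t; split=> //; have [->|xNs] := eqVneq x s; first exact: connect0.
apply: connect_trans xs; apply: connect1; move: xy => /andP[xy xyT].
rewrite /adj xy in_setD1 xyT andbT; apply: contra_neq xNs => exy.
have : x \in [set s; t] by rewrite -exy set21.
by rewrite !inE => /orP[/eqP //|/eqP xt]; rewrite -xt xS in tNS.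
Qed.

Lemma connect_cut T S x y : connect (adj T) x y -> x \in S -> y \notin S ->
  exists s t, [/\ s \in S, t \notin S, adj T s t,
    connect (adj (T :\ [set s; t])) x s & connect (adj (T :\ [set s; t])) t y].
Proof.
case/connectP=> p xp -> xS; case: (shortenP xp) => q xq uq _ lS.
exact: uniq_path_cut.
Qed.

Lemma connect_setD1_pair T u v z : connect (adj T) u z ->
  connect (adj (T :\ [set u; v])) u z || connect (adj (T :\ [set u; v])) v z.
Proof.
set U := T :\ _; set K := [pred z | connect (adj U) u z || connect (adj U) v z].
have closedK : closed (adj T) K.
  move=> x y /andP[xy xyT]; have [exy|nexy] := eqVneq [set x; y] [set u; v].
    have inK a : a \in [set u; v] -> a \in K.
      by rewrite !inE => /orP[] /eqP->; rewrite connect0 ?orbT.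
    by rewrite !inK // -exy !inE eqxx ?orbT.
  have xyU : adj U x y by rewrite /adj xy in_setD1 nexy xyT.
  by rewrite !inE /= !(same_connect_r (connect_adj_sym U) (connect1 xyU)).
by move/(closed_connect closedK); rewrite !inE /= connect0 => <-.
Qed.

Lemma spanning_tree_grow T (r : V) k : gconnected T -> k < #|V| ->
  exists (A : {set V}) (P : {set {set V}}), [/\ #|A| = k.+1, P \subset T, #|P| = k,
    forall e, e \in P -> e \subset A & forall z, z \in A -> connect (adj P) r z].
Proof.
move=> /gconnectedP cT; elim: k => [_|k IHk kV].
  exists [set r], set0; split; rewrite ?cards1 ?cards0 ?sub0set //.
    by move=> e; rewrite inE.
  by move=> z; rewrite inE => /eqP->; apply: connect0.
have [A [P [cA sPT cP PA rA]]] := IHk (ltnW kV).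
have [y yNA] : exists y, y \notin A.
  have : 0 < #|~: A| by have := cardsC A; rewrite cA; lia.
  by case/card_gt0P=> y; rewrite inE; exists y.
have [x xA] : exists x, x \in A by apply/card_gt0P; rewrite cA.
have [s [t [sA tNA /andP[st stT] _ _]]] := connect_cut (cT x y) xA yNA.
have stNP : [set s; t] \notin P.
  by apply: contra tNA => /PA /subsetP; apply; rewrite set22.
exists (t |: A), ([set s; t] |: P); split.
- by rewrite cardsU1 tNA cA.
- by rewrite subUset sub1set stT sPT.
- by rewrite cardsU1 stNP cP.
- move=> e /setU1P[->|/PA eA].
    by rewrite subUset !sub1set setU11 !inE sA orbT.
  exact: subset_trans eA (subsetUr _ _).
have rP z : z \in A -> connect (adj ([set s; t] |: P)) r z.
  by move/rA; apply: connect_subset; apply: subsetUr.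
move=> z /setU1P[->|/rP //].
by apply: connect_trans (rP s sA) (connect1 _); rewrite /adj st setU11.
Qed.

Lemma gconnected_spanning_tree T : gconnected T -> exists P, spanning_tree T P.
Proof.
move=> cT; case: (pickP (@predT V)) => [r _|V0]; last first.
  exists set0; rewrite /spanning_tree sub0set cards0 (eq_card0 V0).
  by rewrite /= andbT; apply/forallP => x; have := V0 x.
have V_gt0 : 0 < #|V| by apply/card_gt0P; exists r.
have [|A [P [cA sPT cP _ rA]]] := spanning_tree_grow r cT (k := #|V|.-1).
  by rewrite prednK.
have AT : A = setT by apply/eqP; rewrite eqEcard subsetT cardsT cA /=; lia.
exists P; rewrite /spanning_tree sPT cP eqxx andbT /=.
by apply: (@gconnected_from _ r) => z; rewrite rA // AT inE.
Qed.

Lemma gconnected_card T : gconnected T -> #|V|.-1 <= #|T|.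
Proof. by case/gconnected_spanning_tree=> P /and3P[sPT _ /eqP <-]; apply: subset_leq_card. Qed.

Lemma spanning_treeD1_disconnected E T a :
  spanning_tree E T -> a \in T -> ~~ gconnected (T :\ a).
Proof.
case/and3P=> _ _ /eqP cT aT; apply/negP => /gconnected_card.
by rewrite -cT (cardsD1 a T) aT; lia.
Qed.

Lemma spanning_tree_exchange E F T s t b :
    spanning_tree F T -> [set s; t] \in T -> b \notin T ->
    b |: (T :\ [set s; t]) \subset E -> connect (adj (b |: (T :\ [set s; t]))) s t ->
  spanning_tree E (b |: (T :\ [set s; t])).
Proof.
case/and3P=> _ cT /eqP nT stT bNT sE cst; rewrite /spanning_tree sE /=.
apply/andP; split; last first.
  by rewrite cardsU1 in_setD1 (negbTE bNT) andbF -nT (cardsD1 [set s; t] T) stT.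
apply: (gconnected_subrel cT) => x y /andP[xy xyT].
have [exy|nexy] := eqVneq [set x; y] [set s; t]; first exact: connect_pair cst exy.
by apply: connect1; rewrite /adj xy !inE nexy xyT orbT.
Qed.

Lemma spanning_tree_add_edge E T e : spanning_tree E T -> spanning_tree (add_edge E e) T.
Proof.
by case/and3P=> sTE cT nT; rewrite /spanning_tree cT nT andbT (subset_trans sTE) ?subsetUr.
Qed.

Lemma spanning_tree_add_edge_notin E T e :
  spanning_tree (add_edge E e) T -> e \notin T -> spanning_tree E T.
Proof.
case/and3P=> sTE cT nT eNT; rewrite /spanning_tree cT nT !andbT; apply/subsetP => x xT.
by have /setU1P[xe|//] := subsetP sTE x xT; rewrite -xe xT in eNT.
Qed.

Definition component T x := [set z | connect (adj T) x z].

Lemma spanning_treeD1_component F T u v : spanning_tree F T -> [set u; v] \in T ->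
  v \notin component (T :\ [set u; v]) u.
Proof.
move=> stT eT; apply: contra (spanning_treeD1_disconnected stT eT); rewrite inE => uv.
case/and3P: stT => _ /gconnectedP cT _; apply: (@gconnected_from _ u) => z.
by case/orP: (connect_setD1_pair v (cT u z)) => // /(connect_trans uv).
Qed.

Lemma component_edge_notin T x p q :
  p \in component T x -> q \notin component T x -> [set p; q] \notin T.
Proof.
rewrite !inE => xp xNq; have pq : p != q by apply: contraNneq xNq => <-.
apply: contra xNq => pqT; have adj_pq : adj T p q by rewrite /adj pq pqT.
exact: connect_trans xp (connect1 adj_pq).
Qed.

Lemma spanning_tree_reconnect E T u v p q :
    spanning_tree (add_edge E [set u; v]) T -> [set u; v] \in T -> [set u; v] \notin E ->
    [set p; q] \in E -> p \in component (T :\ [set u; v]) u ->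
    q \notin component (T :\ [set u; v]) u ->
  spanning_tree E ([set p; q] |: (T :\ [set u; v])).
Proof.
set U := T :\ _ => stT eT eNE pqE pS qNS.
have pq : p != q by apply: contraNneq qNS => <-.
have pqNU : [set p; q] \notin U := component_edge_notin pS qNS.
have pqNT : [set p; q] \notin T.
  by rewrite -(setD1K eT) in_setU1 negb_or pqNU andbT; apply: contraNneq eNE => <-.
apply: (spanning_tree_exchange stT) => //.
  rewrite subUset sub1set pqE; apply/subsetP => x /setD1P[xe xT].
  by case/and3P: stT => /subsetP/(_ x xT)/setU1P[xuv|//]; rewrite xuv eqxx in xe.
have sU z y : connect (adj U) z y -> connect (adj ([set p; q] |: U)) z y.
  exact/connect_subset/subsetUr.
rewrite !inE in pS qNS; apply: connect_trans (sU _ _ pS) _.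
have adj_pq : adj ([set p; q] |: U) p q by rewrite /adj pq setU11.
apply: connect_trans (connect1 adj_pq) _.
case/and3P: stT => _ /gconnectedP cT _.
case/orP: (connect_setD1_pair v (cT u q)) => [uq|vq]; first by rewrite uq in qNS.
by apply: sU; rewrite connect_adj_sym.
Qed.

End Connectivity.

Local Open Scope ring_scope.

Section Weights.
Variables (R : realType) (V : finType).
Implicit Types (E T : {set {set V}}) (w : {set V} -> R) (S e : {set V}).

Lemma tweight_subset w E T : (forall e, e \in E -> 0 <= w e) -> T \subset E ->
  tweight w T <= tweight w E.
Proof.
move=> w_ge0 /setIidPr sTE; rewrite /tweight [leRHS](big_setID T) /= sTE lerDl.
by apply: sumr_ge0 => e /setDP[/w_ge0].
Qed.

Lemma tweight_add_weight w e c T : e \notin T -> tweight (add_weight w e c) T = tweight w T.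
Proof. by move=> eNT; apply: eq_bigr => x xT; rewrite /add_weight; case: eqP xT eNT => // ->->. Qed.

Lemma tweight_add_weight_in w e c T : e \in T ->
  tweight (add_weight w e c) T = tweight w T - w e + c.
Proof.
move=> eT; have tweightD1 w0 : tweight w0 T = w0 e + tweight w0 (T :\ e).
  by rewrite /tweight (big_setD1 e eT).
by rewrite !tweightD1 tweight_add_weight ?setD11 // /add_weight eqxx; lra.
Qed.

Lemma tweight_exchange w T a b : a \in T -> b \notin T :\ a ->
  tweight w (b |: (T :\ a)) = tweight w T - w a + w b.
Proof.
move=> aT bNT; rewrite /tweight big_setU1 //=.
rewrite (big_setD1 a aT) /=; lra.
Qed.

Lemma f_MST_le E w T : spanning_tree E T -> f_MST E w <= tweight w T.
Proof. exact: bigmin_le_cond. Qed.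

Lemma f_MST_attained E w : (forall e, e \in E -> 0 <= w e) -> gconnected E ->
  exists2 T, spanning_tree E T & f_MST E w = tweight w T.
Proof.
move=> w_ge0 /gconnected_spanning_tree[T0 stT0].
have le_tE T : spanning_tree E T -> tweight w T <= tweight w E.
  by case/and3P=> sTE _ _; apply: tweight_subset.
have [T stT fT] := eq_bigmin T0 _ (tweight w) stT0 le_tE.
by exists T.
Qed.

Lemma crossing_pair S s t : s \in S -> t \notin S -> crossing S [set s; t].
Proof.
move=> sS tNS; rewrite /crossing (_ : _ :&: S = [set s]) ?cards1 //.
apply/setP => z; rewrite !inE; have [->|_] := eqVneq z s; first by rewrite sS.
by case: eqVneq => [->|]; rewrite ?(negbTE tNS) ?andbF.
Qed.

Lemma crossingP S e : #|e| = 2%N -> crossing S e ->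
  exists p q, [/\ e = [set p; q], p \in S & q \notin S].
Proof.
move=> /eqP/cards2P[x [y [xy ->]]]; rewrite /crossing.
have [xS|xNS] := boolP (x \in S); have [yS|yNS] := boolP (y \in S).
- rewrite (_ : _ :&: S = [set x; y]) ?cards2 ?xy //.
  by apply/setIidPl; rewrite subUset !sub1set xS.
- by exists x, y.
- by exists y, x; rewrite setUC.
by rewrite disjoint_setI0 ?cards0 // disjoints_subset subUset !sub1set !inE xNS.
Qed.

Lemma w1_le E w S e : e \in E -> crossing S e -> w1 E w S <= w e.
Proof. by move=> eE eS; apply: bigmin_le_cond; rewrite eE. Qed.

Lemma w1_ge0 E w S : (forall e, e \in E -> 0 <= w e) -> 0 <= w1 E w S.
Proof.
move=> w_ge0; apply: le_bigmin => [|e /andP[/w_ge0 //]].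
by apply: sumr_ge0.
Qed.

Lemma w1_attained E w S e : (forall e, e \in E -> 0 <= w e) -> e \in E -> crossing S e ->
  exists2 b, (b \in E) && crossing S b & w1 E w S = w b.
Proof.
move=> w_ge0 eE eS; have le_wE b : (b \in E) && crossing S b -> w b <= tweight w E.
  case/andP=> bE _; have -> : w b = tweight w [set b] by rewrite /tweight big_set1.
  by apply: tweight_subset; rewrite ?sub1set.
have [b bS wb] := eq_bigmin e _ w (introT andP (conj eE eS)) le_wE.
by exists b.
Qed.

Lemma w1_le_RS E w S : cut_has_nonedge E S -> w1 E w S <= RS_rhs E w.
Proof. exact: le_bigmax_cond. Qed.

Lemma RS_attained E w u v : (forall e, e \in E -> 0 <= w e) ->
    u != v -> [set u; v] \notin E ->
  exists2 S, cut_has_nonedge E S & RS_rhs E w = w1 E w S.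
Proof.
move=> w_ge0 uv uvNE; have cut_u : cut_has_nonedge E [set u].
  apply/existsP; exists u; rewrite set11 /=; apply/existsP; exists v.
  by rewrite !inE eq_sym uv uvNE.
have [S cutS RS_S] := eq_bigmax _ _ (w1 E w) cut_u (fun S _ => w1_ge0 S w_ge0).
by exists S.
Qed.

End Weights.

Section AddEdge.
Variables (R : realType) (V : finType) (E : {set {set V}}) (w : {set V} -> R).
Variables (u v : V) (c : R).
Hypotheses (w_ge0 : forall e, e \in E -> 0 <= w e) (E_connected : gconnected E).
Hypothesis uv_notin : [set u; v] \notin E.

Local Notation e := [set u; v].
Local Notation E' := (add_edge E e).
Local Notation w' := (add_weight w e c).

Lemma f_MST_add_edge_le : f_MST E' w' <= f_MST E w.
Proof.
have [T stT ->] := f_MST_attained w_ge0 E_connected.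
have eNT : e \notin T by apply: contra uv_notin; case/and3P: stT => /subsetP/(_ e).
by rewrite -(tweight_add_weight w c eNT); apply/f_MST_le/spanning_tree_add_edge.
Qed.

Lemma f_MST_add_edge_cut (S : {set V}) : u \in S -> v \notin S ->
  f_MST E' w' + w1 E w S <= f_MST E w + c.
Proof.
move=> uS vNS; have [T stT ->] := f_MST_attained w_ge0 E_connected.
have [sTE /gconnectedP cT _] := and3P stT.
have [s [t [sS tNS /andP[_ stT'] us tv]]] := connect_cut (cT u v) uS vNS.
have eNT : e \notin T by apply: contra uv_notin => /(subsetP sTE).
set T' := e |: (T :\ [set s; t]).
have sU x y : connect (adj (T :\ [set s; t])) x y -> connect (adj T') x y.
  exact/connect_subset/subsetUr.
have uv : u != v by apply: contraNneq vNS => <-.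
have st_conn : connect (adj T') s t.
  rewrite connect_adj_sym in us; rewrite connect_adj_sym in tv.
  apply: connect_trans (sU _ _ us) _.
  have adj_uv : adj T' u v by rewrite /adj uv setU11.
  exact: connect_trans (connect1 adj_uv) (sU _ _ tv).
have stT'' : spanning_tree E' T'.
  apply: spanning_tree_exchange stT stT' eNT _ st_conn.
  by rewrite setUS // (subset_trans (subsetDl _ _) sTE).
have ae : [set s; t] != e by apply: contraNneq eNT => <-.
have eNTa : e \notin T :\ [set s; t] by rewrite in_setD1 (negbTE eNT) andbF.
have := f_MST_le w' stT''; rewrite tweight_exchange // tweight_add_weight //.
rewrite /add_weight eqxx (negbTE ae).
have := w1_le w (subsetP sTE _ stT') (crossing_pair sS tNS); lra.
Qed.

Lemma f_MST_le_add_edge_RS : u != v -> 0 <= c -> (forall a, a \in E -> #|a| = 2%N) ->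
  f_MST E w <= f_MST E' w' + RS_rhs E w.
Proof.
move=> uv c_ge0 E2; have /gconnectedP cE := E_connected.
have w'_ge0 x : x \in E' -> 0 <= w' x.
  by rewrite /add_weight in_setU1; case: eqP => //= _ /w_ge0.
have E'_connected : gconnected E'.
  apply: gconnected_subrel E_connected _ => x y xy.
  exact/connect1/(adj_subset (subsetUr _ _) xy).
have [T stT ->] := f_MST_attained w'_ge0 E'_connected.
have RS_ge0 : 0 <= RS_rhs E w by apply: bigmax_ge_id.
have [eT|eNT] := boolP (e \in T); last first.
  have := f_MST_le w (spanning_tree_add_edge_notin stT eNT).
  rewrite tweight_add_weight //; lra.
set S := component (T :\ e) u.
have uS : u \in S by rewrite inE connect0.
have vNS : v \notin S := spanning_treeD1_component stT eT.
have cutS : cut_has_nonedge E S.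
  by apply/existsP; exists u; rewrite uS; apply/existsP; exists v; rewrite inE vNS.
have [s [t [sS tNS /andP[_ stE] _ _]]] := connect_cut (cE u v) uS vNS.
have [b /andP[bE bS] w1b] := w1_attained w_ge0 stE (crossing_pair sS tNS).
have [p [q [bpq pS qNS]]] := crossingP (E2 b bE) bS; rewrite bpq in bE w1b.
have := f_MST_le w (spanning_tree_reconnect stT eT uv_notin bE pS qNS).
rewrite tweight_exchange ?(component_edge_notin pS qNS) // tweight_add_weight_in //.
have := w1_le_RS w cutS; lra.
Qed.

End AddEdge.

Unset Implicit Arguments.

Theorem mainTheorem7 (R : realType) (V : finType)
    (E : {set {set V}}) (w : {set V} -> R) :
  (forall e, e \in E -> #|e| = 2%N) ->
  (forall e, e \in E -> 0 <= w e) ->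
  gconnected E ->
  (exists u v : V, u != v /\ [set u; v] \notin E) ->
  (* RS_{f_MST}(G) = RS_rhs E w, i.e. RS_rhs E w is the maximum of
     |f_MST(V,E) - f_MST(V, E u {e})| over non-edges e and weights c >= 0 *)
  (forall (u v : V) (c : R), u != v -> [set u; v] \notin E -> 0 <= c ->
     `|f_MST E w - f_MST (add_edge E [set u; v]) (add_weight w [set u; v] c)|
       <= RS_rhs E w) /\
  (exists (u v : V) (c : R), [/\ u != v, [set u; v] \notin E, 0 <= c &
     `|f_MST E w - f_MST (add_edge E [set u; v]) (add_weight w [set u; v] c)|
       = RS_rhs E w]).
Proof.
move=> E2 w_ge0 E_connected [u0 [v0 [uv0 uv0_notin]]]; split.
  move=> u v c uv uv_notin c_ge0.
  have := f_MST_add_edge_le c w_ge0 E_connected uv_notin.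
  have := f_MST_le_add_edge_RS w_ge0 E_connected uv_notin uv c_ge0 E2.
  by move=> ? ?; rewrite ger0_norm; lra.
have [S /existsP[u /andP[uS /existsP[v /andP[vNS uv_notin]]]] RS_S] :=
  RS_attained w_ge0 uv0 uv0_notin.
rewrite inE in vNS; have uv : u != v by apply: contraNneq vNS => <-.
exists u, v, 0; split => //.
have := f_MST_add_edge_cut 0 w_ge0 E_connected uv_notin uS vNS.
have := f_MST_le_add_edge_RS w_ge0 E_connected uv_notin uv (lexx 0) E2.
have := w1_ge0 S w_ge0.
by rewrite RS_S => ? ? ?; rewrite ger0_norm; lra.
Qed.
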